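(* Let $x\in[0,1]\setminus\mathcal E$. Then for every $n\ge0$, $x\in I_n(x)$, where $I_n(x)$ is the open interval with endpoints $a_n(x)$ and $b_n(x)=a_n(x)+\varepsilon_n(x)\ell_n(x)$. Moreover, the sign of the slope of $T^n$ on $I_n(x)$ is $\varepsilon_n(x)$, $T^n(a_n(x))=0$, and $T^n$ maps $I_n(x)$ onto $(0,1)$.
   Context: $T:[0,1]\to[0,1]$ is $T(x)=3x$ on $[0,\frac13)$, $6x-2$ on $[\frac13,\frac12)$, $4-6x$ on $[\frac12,\frac23)$, $3x-2$ on $[\frac23,1]$. Let $U(x)=0,1,2,3$ and $\widetilde U(x)=0,\frac13,\frac23,\frac23$ on these four intervals respectively. For $x\in[0,1]$, $n\ge0$: $u_n(x)=U(T^nx)$, $\widetilde u_n(x)=\widetilde U(T^nx)$; $\beta_i(x,n)=\#\{k<n:u_k(x)=i\}$, $\beta_{i,j}(x,n)=\beta_i(x,n)+\beta_j(x,n)$; $\varepsilon_n(x)=(-1)^{\beta_2(x,n)}$, $\ell_n(x)=3^{-\beta_{0,3}(x,n)}6^{-\beta_{1,2}(x,n)}$, $a_0(x)=0$ and $a_n(x)=\sum_{k=0}^{n-1}\widetilde u_k(x)\varepsilon_k(x)\ell_k(x)$ for $n\ge1$. $\mathcal E$ is the set of $x\in[0,1]$ whose sequence $(u_n(x))_n$ is eventually constant equal to $0$ or eventually constant equal to $3$. The open interval with endpoints $a,b$ means the set of points strictly between $a$ and $b$ (even if $b<a$). *)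

From Stdlib Require Import Reals Lra Lia.
Open Scope R_scope.

(* The map T on [0,1] (formula extended to all of R; orbits of points of
   [0,1] stay in [0,1]). *)
Definition T (x : R) : R :=
  if Rlt_dec x (1/3) then 3 * x
  else if Rlt_dec x (1/2) then 6 * x - 2
  else if Rlt_dec x (2/3) then 4 - 6 * x
  else 3 * x - 2.

Definition U (x : R) : nat :=
  if Rlt_dec x (1/3) then 0%nat
  else if Rlt_dec x (1/2) then 1%nat
  else if Rlt_dec x (2/3) then 2%nat
  else 3%nat.

Definition Ut (x : R) : R :=
  if Rlt_dec x (1/3) then 0
  else if Rlt_dec x (1/2) then 1/3
  else if Rlt_dec x (2/3) then 2/3
  else 2/3.

Definition Tn (n : nat) (x : R) : R := Nat.iter n T x.

Definition u (n : nat) (x : R) : nat := U (Tn n x).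
Definition ut (n : nat) (x : R) : R := Ut (Tn n x).

Fixpoint beta (i : nat) (x : R) (n : nat) : nat :=
  match n with
  | O => O
  | S m => (beta i x m + (if Nat.eqb (u m x) i then 1 else 0))%nat
  end.

Definition beta2 (i j : nat) (x : R) (n : nat) : nat :=
  (beta i x n + beta j x n)%nat.

Definition eps (x : R) (n : nat) : R := (-1) ^ (beta 2 x n).

Definition ell (x : R) (n : nat) : R :=
  / (3 ^ (beta2 0 3 x n) * 6 ^ (beta2 1 2 x n)).

Fixpoint a (x : R) (n : nat) : R :=
  match n with
  | O => 0
  | S m => a x m + ut m x * eps x m * ell x m
  end.

Definition b (x : R) (n : nat) : R := a x n + eps x n * ell x n.

Definition inE (x : R) : Prop :=
  (exists N, forall n, (N <= n)%nat -> u n x = 0%nat) \/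
  (exists N, forall n, (N <= n)%nat -> u n x = 3%nat).

Definition open_between (p q y : R) : Prop := Rmin p q < y < Rmax p q.

(** Write [d_n = b_n - a_n = eps_n ell_n].  The affine map [w |-> a_n + d_n w]
    is an inverse branch of [T^n] on [(0,1)]: it is the composite of the
    inverse branches of [T] selected by the digits [u_0, ..., u_(n-1)], which is
    exactly how [a_n], [eps_n] and [ell_n] are updated.  Since every real [y]
    is recovered from [T y] by the inverse branch of its own digit, one gets
    [x = a_n + d_n T^n x].  Finally [0] and [1] are fixed by [T], so an orbit
    outside [E] never reaches them and [T^n x] lies in [(0,1)]. *)

From Stdlib Require Import Reals Lra.
Open Scope R_scope.

Lemma Tn_S n y : Tn (S n) y = T (Tn n y).
Proof. reflexivity. Qed.

Lemma T_0 : T 0 = 0.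
Proof. unfold T; repeat destruct Rlt_dec; lra. Qed.

Lemma T_1 : T 1 = 1.
Proof. unfold T; repeat destruct Rlt_dec; lra. Qed.

Lemma T_unit_interval y : 0 <= y <= 1 -> 0 <= T y <= 1.
Proof. unfold T; repeat destruct Rlt_dec; lra. Qed.

Lemma Tn_unit_interval n y : 0 <= y <= 1 -> 0 <= Tn n y <= 1.
Proof. apply (Nat.iter_invariant n R T (fun z => 0 <= z <= 1)), T_unit_interval. Qed.

Lemma Tn_fixed_after x c N m :
  T c = c -> Tn N x = c -> (N <= m)%nat -> Tn m x = c.
Proof.
  intros Hc HN; induction 1 as [|m _ IH]; [exact HN|].
  now rewrite Tn_S, IH.
Qed.

Lemma Tn_eq0_inE x N : Tn N x = 0 -> inE x.
Proof.
  intros HN; left; exists N; intros m Hm; unfold u.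
  rewrite (Tn_fixed_after x 0 N m T_0 HN Hm).
  unfold U; destruct Rlt_dec; [reflexivity | lra].
Qed.

Lemma Tn_eq1_inE x N : Tn N x = 1 -> inE x.
Proof.
  intros HN; right; exists N; intros m Hm; unfold u.
  rewrite (Tn_fixed_after x 1 N m T_1 HN Hm).
  unfold U; repeat destruct Rlt_dec; first [reflexivity | lra].
Qed.

Lemma Tn_open_unit_interval x n :
  0 <= x <= 1 -> ~ inE x -> 0 < Tn n x < 1.
Proof.
  intros Hx HE; pose proof (Tn_unit_interval n x Hx).
  assert (Tn n x <> 0) by (intro H0; exact (HE (Tn_eq0_inE x n H0))).
  assert (Tn n x <> 1) by (intro H1; exact (HE (Tn_eq1_inE x n H1))).
  lra.
Qed.

(* The inverse branch of [T] on its [i]-th interval is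
   [w |-> branch_zero i + branch_inv_slope i * w]; digits above [3] never occur
   and are sent to the last branch. *)
Definition branch_zero (i : nat) : R :=
  match i with O => 0 | 1 => 1/3 | _ => 2/3 end.

Definition branch_inv_slope (i : nat) : R :=
  match i with 1 => 1/6 | 2 => -1/6 | _ => 1/3 end.

Lemma branch_zero_unit_interval i : 0 <= branch_zero i < 1.
Proof. destruct i as [|[|i]]; simpl; lra. Qed.

Lemma T_branch_zero i : T (branch_zero i) = 0.
Proof. destruct i as [|[|i]]; simpl; unfold T; repeat destruct Rlt_dec; lra. Qed.

Lemma inv_branch_unit_interval i w :
  0 < w < 1 -> 0 < branch_zero i + branch_inv_slope i * w < 1.
Proof. destruct i as [|[|[|i]]]; simpl; lra. Qed.

Lemma T_inv_branch i w :
  0 < w < 1 -> T (branch_zero i + branch_inv_slope i * w) = w.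
Proof.
  destruct i as [|[|[|i]]]; simpl; intros Hw; unfold T;
    repeat destruct Rlt_dec; lra.
Qed.

Lemma inv_branch_T y : y = branch_zero (U y) + branch_inv_slope (U y) * T y.
Proof. unfold U, T; repeat destruct Rlt_dec; simpl; lra. Qed.

Lemma Ut_branch_zero y : Ut y = branch_zero (U y).
Proof. unfold Ut, U; repeat destruct Rlt_dec; reflexivity. Qed.

Lemma u_cases x n :
  u n x = 0%nat \/ u n x = 1%nat \/ u n x = 2%nat \/ u n x = 3%nat.
Proof. unfold u, U; repeat destruct Rlt_dec; auto. Qed.

Definition signed_length (x : R) (n : nat) : R := eps x n * ell x n.

Lemma b_signed_length x n : b x n = a x n + signed_length x n.
Proof. reflexivity. Qed.

Lemma signed_length_0 x : signed_length x 0 = 1.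
Proof. unfold signed_length, eps, ell, beta2; simpl; field. Qed.

Lemma signed_length_S x n :
  signed_length x (S n) = signed_length x n * branch_inv_slope (u n x).
Proof.
  unfold signed_length, eps, ell, beta2; cbn [beta].
  pose proof (pow_nonzero 3 (beta 0 x n) ltac:(lra)).
  pose proof (pow_nonzero 3 (beta 3 x n) ltac:(lra)).
  pose proof (pow_nonzero 6 (beta 1 x n) ltac:(lra)).
  pose proof (pow_nonzero 6 (beta 2 x n) ltac:(lra)).
  destruct (u_cases x n) as [-> | [-> | [-> | ->]]]; cbn [Nat.eqb branch_inv_slope];
    rewrite !pow_add; simpl pow; field; repeat split; assumption.
Qed.

Lemma ell_pos x n : 0 < ell x n.
Proof.
  unfold ell; apply Rinv_0_lt_compat, Rmult_lt_0_compat; apply pow_lt; lra.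
Qed.

Lemma eps_sqr x n : eps x n * eps x n = 1.
Proof. unfold eps; rewrite <- Rpow_mult_distr; replace (-1 * -1) with 1 by ring; apply pow1. Qed.

Lemma eps_neq0 x n : eps x n <> 0.
Proof. intro H0; pose proof (eps_sqr x n); rewrite H0 in *; lra. Qed.

Lemma signed_length_neq0 x n : signed_length x n <> 0.
Proof.
  apply Rmult_integral_contrapositive_currified;
    [apply eps_neq0 | apply Rgt_not_eq, ell_pos].
Qed.

Lemma eps_div_signed_length_pos x n : 0 < eps x n * / signed_length x n.
Proof.
  unfold signed_length; rewrite Rinv_mult, <- Rmult_assoc, Rinv_r, Rmult_1_l
    by apply eps_neq0.
  apply Rinv_0_lt_compat, ell_pos.
Qed.

Lemma a_S x n :
  a x (S n) = a x n + signed_length x n * branch_zero (u n x).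
Proof. simpl; unfold ut, u, signed_length; rewrite Ut_branch_zero; ring. Qed.

Lemma Tn_inv_cylinder x n w :
  0 < w < 1 -> Tn n (a x n + signed_length x n * w) = w.
Proof.
  revert w; induction n as [|n IH]; intros w Hw.
  - simpl; rewrite signed_length_0; ring.
  - rewrite Tn_S, a_S, signed_length_S.
    set (i := u n x).
    replace (a x n + signed_length x n * branch_zero i
               + signed_length x n * branch_inv_slope i * w)
      with (a x n + signed_length x n * (branch_zero i + branch_inv_slope i * w))
      by ring.
    rewrite IH by now apply inv_branch_unit_interval.
    now apply T_inv_branch.
Qed.

Lemma Tn_a x n : Tn n (a x n) = 0.
Proof.
  induction n as [|n IH]; [reflexivity|].
  rewrite Tn_S, a_S.
  destruct (branch_zero_unit_interval (u n x)) as [[Hpos | <-] H1].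
  - rewrite Tn_inv_cylinder by lra; apply T_branch_zero.
  - now rewrite Rmult_0_r, Rplus_0_r, IH, T_0.
Qed.

Lemma a_add_signed_length_Tn x n : x = a x n + signed_length x n * Tn n x.
Proof.
  induction n as [|n IH]; [simpl; rewrite signed_length_0; ring|].
  rewrite a_S, signed_length_S, Tn_S.
  unfold u; rewrite IH at 1; rewrite (inv_branch_T (Tn n x)) at 1; ring.
Qed.

Lemma open_between_affine p d y : d <> 0 ->
  open_between p (p + d) y <-> exists w, 0 < w < 1 /\ y = p + d * w.
Proof.
  intros Hd; unfold open_between, Rmin, Rmax; split.
  - intros Hy; exists ((y - p) / d).
    assert (Hw : (y - p) / d * d = y - p) by (field; exact Hd).
    split; [destruct (Rle_dec p (p + d)); split; nra | field; exact Hd].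
  - intros [w [Hw ->]]; destruct (Rle_dec p (p + d)); split; nra.
Qed.

Theorem proposition2p3 (x : R) :
  0 <= x <= 1 -> ~ inE x ->
  forall n : nat,
    open_between (a x n) (b x n) x /\
    (exists s c : R, 0 < eps x n * s /\
       forall y, open_between (a x n) (b x n) y -> Tn n y = s * y + c) /\
    Tn n (a x n) = 0 /\
    (forall y, open_between (a x n) (b x n) y -> 0 < Tn n y < 1) /\
    (forall z, 0 < z < 1 -> exists y, open_between (a x n) (b x n) y /\ Tn n y = z).
Proof.
  intros Hx HE n.
  pose proof (signed_length_neq0 x n) as Hd.
  rewrite b_signed_length.
  split; [|split; [|split; [|split]]].
  - apply open_between_affine; [exact Hd|].
    exists (Tn n x); split; [now apply Tn_open_unit_interval | apply a_add_signed_length_Tn].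
  - exists (/ signed_length x n), (- a x n / signed_length x n).
    split; [apply eps_div_signed_length_pos|].
    intros y Hy; apply open_between_affine in Hy as [w [Hw ->]]; [|exact Hd].
    rewrite Tn_inv_cylinder by exact Hw; field; exact Hd.
  - apply Tn_a.
  - intros y Hy; apply open_between_affine in Hy as [w [Hw ->]]; [|exact Hd].
    now rewrite Tn_inv_cylinder.
  - intros z Hz; exists (a x n + signed_length x n * z); split.
    + apply open_between_affine; [exact Hd | now exists z].
    + now apply Tn_inv_cylinder.
Qed.
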